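(* Let $(X,\Sigma,\mu)$ be a measure space, $n\ge1$, $\mathbb{F}\in\{\mathbb{R},\mathbb{C}\}$, $h\in L^2(X,\mu;\mathbb{F})$, and define $T:L^2(X,\mu;\mathbb{F}^n)\to\mathbb{F}^n$ by $T(F)=\int_X h(x)f_x\,d\mu(x)$ for $F=(f_x)_{x\in X}$. Suppose there is a measurable subset $Y\subseteq X$ such that $\dim L^2(Y,\mu;\mathbb{F})\ge n$ and $\mu\big((X\setminus Y)\cap h^{-1}(\mathbb{F}\setminus\{0\})\big)>0$. Then for every $d\in\mathbb{F}^n$, $T^{-1}(\{d\})$ contains a continuous frame $\Phi\in\mathcal{F}^{\mathbb{F}}_{(X,\mu),n}$.
   Context: A family $\Phi=(\varphi_x)_{x\in X}$ in $\mathbb{F}^n$ (with measurable coordinates) is a continuous frame indexed by $(X,\mu)$ if there are $0<A\le B$ with $A\|v\|^2\le\int_X|\langle v,\varphi_x\rangle|^2d\mu(x)\le B\|v\|^2$ for all $v\in\mathbb{F}^n$. $\mathcal{F}^{\mathbb{F}}_{(X,\mu),n}$ denotes the set of such frames, viewed as a subset of $L^2(X,\mu;\mathbb{F}^n)$. $L^2(Y,\mu;\mathbb{F})$ is the $L^2$ space of the restriction of $\mu$ to $Y$. *)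

From HB Require Import structures.
From mathcomp Require Import all_boot all_order all_algebra.
From mathcomp Require Import all_classical all_reals all_analysis.
From mathcomp Require complex.
Import complex.ComplexField.
Set Implicit Arguments. Unset Strict Implicit. Unset Printing Implicit Defensive.
Import Order.TTheory GRing.Theory Num.Theory.
Local Open Scope classical_set_scope.
Local Open Scope ring_scope.

(* A scalar field F in {R, C}, presented through its real coordinates
   (real part, imaginary part) and its conjugation. *)
Record scalars (R : realType) := Scalars {
  sF :> comNzRingType;
  sre : sF -> R;
  sim : sF -> R;
  scj : sF -> sF }.

Definition RealScalars (R : realType) : scalars R :=
  @Scalars R R id (fun _ => 0) id.

Definition ComplexScalars (R : realType) : scalars R :=
  @Scalars R (complex.complex R) (@complex.Re R) (@complex.Im R) (@complex.conjc R).

Definition field_of (R : realType) (b : bool) : scalars R :=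
  if b then ComplexScalars R else RealScalars R.

Section Defs.
Context (R : realType) (S : scalars R).

Definition absq (z : S) : R := sre z ^+ 2 + sim z ^+ 2.

Definition inner n (v w : 'I_n -> S) : S := \sum_(j < n) v j * scj (w j).

Definition normsq n (v : 'I_n -> S) : R := \sum_(j < n) absq (v j).

Context (d : measure_display) (X : measurableType d)
        (mu : {measure set X -> \bar R}).

Definition Fmeasurable (f : X -> S) : Prop :=
  measurable_fun setT (@sre R S \o f) /\ measurable_fun setT (@sim R S \o f).

Definition in_L2_on (D : set X) (f : X -> S) : Prop :=
  Fmeasurable f /\ (\int[mu]_(x in D) (absq (f x))%:E < +oo)%E.

(* dim L^2(Y, mu; F) >= n : there are n elements of L^2(Y,mu;F) that are
   linearly independent over F (as classes modulo mu-a.e. equality on Y) *)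
Definition L2_dim_ge (Y : set X) (n : nat) : Prop :=
  exists g : 'I_n -> X -> S,
    (forall i, in_L2_on Y (g i)) /\
    (forall c : 'I_n -> S,
        {ae mu, forall x, Y x -> \sum_(i < n) c i * g i x = 0} ->
        forall i, c i = 0).

Definition continuous_frame n (phi : X -> 'I_n -> S) : Prop :=
  (forall i, Fmeasurable (fun x => phi x i)) /\
  exists A B : R, 0 < A /\ A <= B /\
    forall v : 'I_n -> S,
      ((A * normsq v)%:E <= \int[mu]_x (absq (inner v (phi x)))%:E)%E /\
      (\int[mu]_x (absq (inner v (phi x)))%:E <= (B * normsq v)%:E)%E.

(* T(Phi) = int_X h(x) phi_x dmu(x) = dv (componentwise, real and imaginary
   parts) *)
Definition T_eq n (h : X -> S) (phi : X -> 'I_n -> S) (dv : 'I_n -> S) : Prop :=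
  forall i,
    (\int[mu]_x (sre (h x * phi x i))%:E = (sre (dv i))%:E)%E /\
    (\int[mu]_x (sim (h x * phi x i))%:E = (sim (dv i))%:E)%E.

End Defs.

From HB Require Import structures.
From mathcomp Require Import all_boot all_order all_algebra.
From mathcomp Require Import all_classical all_reals all_analysis.
From mathcomp Require Import ring lra.
From mathcomp Require complex.
Import Order.TTheory GRing.Theory Num.Theory.
Import measurable_realfun.
Set Implicit Arguments. Unset Strict Implicit. Unset Printing Implicit Defensive.
Local Open Scope classical_set_scope.
Local Open Scope ring_scope.


(* Let g_1, ..., g_n in L^2(Y) be F-linearly independent (dim L^2(Y) >= n) and
   let Z := (X \ Y) /\ {h <> 0}, a set of positive measure.  Put
       phi_x := conj(g(x)) on Y,   phi_x := conj(h(x)) w on Z,   phi_x := 0 else.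
   Then T(phi) = int_Y h conj(g) + K w with K := int_Z |h|^2 > 0, so the choice
   w := (d - int_Y h conj(g)) / K gives T(phi) = d.  The upper frame bound is
   Cauchy-Schwarz together with int ||phi_x||^2 < oo.  For the lower bound,
   <v, phi_x> = sum_j v_j g_j(x) on Y, and int_Y |sum_j v_j g_j|^2 is a real
   quadratic form in the 2n real coordinates of v which is positive definite by
   the independence of the g_j, hence bounded below by A ||v||^2, A > 0. *)

Section QuadraticForms.
Variable R : realFieldType.

Definition sqnorm m (x : 'I_m -> R) : R := \sum_(i < m) x i ^+ 2.

Definition qform m (M : 'I_m -> 'I_m -> R) (x : 'I_m -> R) : R :=
  \sum_(i < m) \sum_(j < m) x i * x j * M i j.

Lemma sqnorm_ge0 m (x : 'I_m -> R) : 0 <= sqnorm x.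
Proof. by apply: sumr_ge0 => i _; exact: sqr_ge0. Qed.

Lemma sqnorm_eq0 m (x : 'I_m -> R) : sqnorm x = 0 -> forall i, x i = 0.
Proof.
move=> /eqP; rewrite psumr_eq0; last by move=> j _; exact: sqr_ge0.
by move=> /allP x0 i; apply/eqP; rewrite -sqrf_eq0; exact: x0 (mem_index_enum _).
Qed.

Lemma cauchy_schwarz m (u v : 'I_m -> R) :
  (\sum_(i < m) u i * v i) ^+ 2 <= sqnorm u * sqnorm v.
Proof.
set W := \sum_(i < m) _.
have [u0|uN0] := eqVneq (sqnorm u) 0.
  rewrite u0 mul0r /W big1 ?expr0n // => i _.
  by rewrite (sqnorm_eq0 u0) mul0r.
have u_gt0 : 0 < sqnorm u by rewrite lt0r uN0 sqnorm_ge0.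
(* the minimum over t of sqnorm (t u - v) is sqnorm v - W^2 / sqnorm u *)
set t := W / sqnorm u.
have : 0 <= \sum_(i < m) (t * u i - v i) ^+ 2.
  by apply: sumr_ge0 => i _; exact: sqr_ge0.
have -> : \sum_(i < m) (t * u i - v i) ^+ 2 = sqnorm v - W ^+ 2 / sqnorm u.
  have -> : \sum_(i < m) (t * u i - v i) ^+ 2 =
            t ^+ 2 * sqnorm u - 2 * t * W + sqnorm v.
    rewrite /sqnorm /W !mulr_sumr -sumrB -big_split /=.
    by apply: eq_bigr => i _; ring.
  by rewrite /t; field.
by rewrite subr_ge0 ler_pdivrMr // mulrC.
Qed.

Definition consv m (x0 : R) (x' : 'I_m -> R) : 'I_m.+1 -> R :=
  fun i => if unlift ord0 i is Some j then x' j else x0.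

Lemma consv0 m x0 (x' : 'I_m -> R) : consv x0 x' ord0 = x0.
Proof. by rewrite /consv unlift_none. Qed.

Lemma consvS m x0 (x' : 'I_m -> R) j : consv x0 x' (lift ord0 j) = x' j.
Proof. by rewrite /consv liftK. Qed.

Lemma consvK m x0 (x' : 'I_m -> R) : (fun j => consv x0 x' (lift ord0 j)) = x'.
Proof. by apply: funext => j; rewrite consvS. Qed.

Section Schur.
Variables (m : nat) (M : 'I_m.+1 -> 'I_m.+1 -> R).
Hypothesis M_sym : forall i j, M i j = M j i.

Definition schur (i j : 'I_m) : R :=
  M (lift ord0 i) (lift ord0 j)
  - M ord0 (lift ord0 i) * M ord0 (lift ord0 j) / M ord0 ord0.

Lemma qform_recl (x : 'I_m.+1 -> R) :
  qform M x = x ord0 ^+ 2 * M ord0 ord0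
    + 2 * x ord0 * (\sum_(j < m) x (lift ord0 j) * M ord0 (lift ord0 j))
    + qform (fun i j => M (lift ord0 i) (lift ord0 j)) (fun j => x (lift ord0 j)).
Proof.
rewrite /qform big_ord_recl /= big_ord_recl /=.
under [X in _ + X = _]eq_bigr do rewrite big_ord_recl /=.
rewrite big_split /= -!addrA; congr (_ + _); rewrite !addrA; congr (_ + _).
rewrite mulr_sumr -big_split /=; apply: eq_bigr => i _.
by rewrite (M_sym (lift ord0 i)); ring.
Qed.

Lemma qform_schur (x : 'I_m.+1 -> R) : M ord0 ord0 != 0 ->
  qform M x = M ord0 ord0 * (x ord0
      + (\sum_(j < m) x (lift ord0 j) * M ord0 (lift ord0 j)) / M ord0 ord0) ^+ 2
    + qform schur (fun j => x (lift ord0 j)).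
Proof.
set s := \sum_(j < m) _; move=> aN0; rewrite qform_recl.
have -> : qform schur (fun j => x (lift ord0 j)) =
    qform (fun i j => M (lift ord0 i) (lift ord0 j)) (fun j => x (lift ord0 j))
    - s ^+ 2 / M ord0 ord0.
  rewrite /qform /s expr2 mulr_suml mulr_suml -sumrB; apply: eq_bigr => i _.
  rewrite mulr_sumr mulr_suml -sumrB; apply: eq_bigr => j _.
  by rewrite /schur; field.
by rewrite -/s; field.
Qed.

Hypotheses (M_psd : forall x, 0 <= qform M x)
           (M_def : forall x, qform M x = 0 -> forall k, x k = 0).

Lemma pivot_gt0 : 0 < M ord0 ord0.
Proof.
have qform_e0 : qform M (consv 1 (fun _ => 0)) = M ord0 ord0.
  rewrite qform_recl consv0 consvK /qform.
  under eq_bigr do rewrite consvS mul0r.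
  rewrite big1 // mulr0 addr0 big1 ?addr0 ?expr1n ?mul1r // => i _.
  by apply: big1 => j _; rewrite !mul0r.
rewrite lt0r -qform_e0 M_psd andbT; apply/eqP => /M_def /(_ ord0).
by rewrite consv0 => /eqP; rewrite oner_eq0.
Qed.

(* ... and the Schur complement is the restriction of the form to the vectors
   (-s/a, x'), hence again symmetric positive definite. *)
Lemma qform_schur_cons (x' : 'I_m -> R) :
  let s := \sum_(j < m) x' j * M ord0 (lift ord0 j) in
  qform M (consv (- s / M ord0 ord0) x') = qform schur x'.
Proof.
move=> s; rewrite qform_schur ?gt_eqF ?pivot_gt0 // consv0 consvK.
under eq_bigr do rewrite consvS.
by rewrite -/s mulNr addNr expr0n /= mulr0 add0r.
Qed.

Lemma schur_sym i j : schur i j = schur j i.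
Proof. by rewrite /schur (M_sym (lift ord0 i)) (mulrC (M ord0 (lift ord0 i))). Qed.

Lemma schur_psd x' : 0 <= qform schur x'.
Proof. by rewrite -qform_schur_cons. Qed.

Lemma schur_def x' : qform schur x' = 0 -> forall k, x' k = 0.
Proof.
rewrite -qform_schur_cons => /M_def x0 k.
by rewrite -(consvS (- (\sum_(j < m) x' j * M ord0 (lift ord0 j)) / M ord0 ord0) x' k) x0.
Qed.

(* A coercivity constant for the Schur complement yields one for M: the first
   coordinate is controlled by the completed square and the others. *)
Lemma coercive_of_schur (A' : R) : 0 < A' ->
  (forall x', A' * sqnorm x' <= qform schur x') ->
  exists2 A, 0 < A & forall x, A * sqnorm x <= qform M x.
Proof.
move=> A'_gt0 HA'.
set a := M ord0 ord0; set b := fun j => M ord0 (lift ord0 j).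
have a_gt0 : 0 < a := pivot_gt0.
pose C := sqnorm b / a ^+ 2.
have C_ge0 : 0 <= C by rewrite /C divr_ge0 ?sqnorm_ge0 ?sqr_ge0.
pose A := Num.min (a / 2) (A' / (2 * C + 1)).
have A_gt0 : 0 < A by rewrite lt_min !divr_gt0 //; lra.
have A_le_a : A <= a / 2 by rewrite ge_min lexx.
have A_le_A' : A * (2 * C + 1) <= A'.
  by rewrite -ler_pdivlMr ?ge_min ?lexx ?orbT //; lra.
exists A => // x.
set x' := fun j => x (lift ord0 j).
set s := \sum_(j < m) x (lift ord0 j) * b j.
set w := x ord0 + s / a.
have s_le : (s / a) ^+ 2 <= C * sqnorm x'.
  rewrite expr_div_n /C (mulrAC (sqnorm b)); apply: ler_wpM2r; first by rewrite invr_ge0 sqr_ge0.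
  by rewrite /s (eq_bigr (fun j => b j * x' j)) => [|j _]; [exact: cauchy_schwarz|rewrite mulrC].
have x0_le : x ord0 ^+ 2 <= 2 * w ^+ 2 + 2 * C * sqnorm x'.
  have -> : x ord0 = w - s / a by rewrite /w addrK.
  have := sqr_ge0 (w + s / a); rewrite !expr2 in s_le *; lra.
have sqnorm_x : sqnorm x = x ord0 ^+ 2 + sqnorm x' by rewrite /sqnorm big_ord_recl.
rewrite qform_schur ?gt_eqF // sqnorm_x -/a -/b -/x' -/s -/w.
have := HA' x'; have := sqnorm_ge0 x'; have := sqr_ge0 w.
move: x0_le A_le_a A_le_A' A_gt0 a_gt0 C_ge0; clear; nra.
Qed.

End Schur.

(* A positive definite quadratic form on R^m is coercive: it dominates a
   positive multiple of the squared norm.  By induction on m, eliminating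
   the first coordinate through the Schur complement. *)
Lemma posdef_qform_coercive m (M : 'I_m -> 'I_m -> R) :
  (forall i j, M i j = M j i) ->
  (forall x, 0 <= qform M x) ->
  (forall x, qform M x = 0 -> forall k, x k = 0) ->
  exists2 A, 0 < A & forall x, A * sqnorm x <= qform M x.
Proof.
elim: m M => [|m IH] M M_sym M_psd M_def.
  by exists 1 => // x; rewrite /sqnorm /qform !big_ord0 mul1r.
have [A' A'_gt0 HA'] := IH _ (schur_sym M_sym) (schur_psd M_sym M_psd M_def)
  (schur_def M_sym M_psd M_def).
exact: coercive_of_schur M_sym M_psd M_def _ A'_gt0 HA'.
Qed.

End QuadraticForms.

Section RealIntegrable.
Variables (R : realType) (d : measure_display) (X : measurableType d)
  (mu : {measure set X -> \bar R}).
Implicit Types f g : X -> R.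

Definition rintegrable (f : X -> R) : Prop := mu.-integrable setT (EFin \o f).
Definition sqintegrable (f : X -> R) : Prop :=
  measurable_fun setT f /\ rintegrable (fun x => f x ^+ 2).

Lemma integral_Rintegral f : rintegrable f ->
  (\int[mu]_x (f x)%:E = (\int[mu]_x f x)%:E)%E.
Proof. by move=> If; rewrite fineK //; exact: integrable_fin_num. Qed.

Lemma eq_rintegrable f g : f =1 g -> rintegrable f -> rintegrable g.
Proof. by move=> fg; apply: eq_integrable => // x _ /=; rewrite fg. Qed.

Lemma rintegrableD f g : rintegrable f -> rintegrable g ->
  rintegrable (fun x => f x + g x).
Proof. by move=> If Ig; exact: (integrableD measurableT If Ig). Qed.

Lemma rintegrableZ c f : rintegrable f -> rintegrable (fun x => c * f x).
Proof. by move=> If; exact: (integrableZl measurableT c If). Qed.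

Lemma rintegrableB f g : rintegrable f -> rintegrable g ->
  rintegrable (fun x => f x - g x).
Proof. by move=> If Ig; exact: (integrableB measurableT If Ig). Qed.

Lemma rintegrable_sum m (F : 'I_m -> X -> R) : (forall k, rintegrable (F k)) ->
  rintegrable (fun x => \sum_(k < m) F k x).
Proof.
move=> IF; have := @integrable_sum _ _ _ mu setT measurableT _ (index_enum 'I_m)
  xpredT (fun k x => (F k x)%:E) (fun k _ => IF k).
by apply: eq_integrable => // x _ /=; rewrite sumEFin.
Qed.

Lemma Rintegral_sum m (F : 'I_m -> X -> R) : (forall k, rintegrable (F k)) ->
  \int[mu]_x (\sum_(k < m) F k x) = \sum_(k < m) \int[mu]_x F k x.
Proof.
elim: m F => [|m IH] F IF.
  by under eq_Rintegral do rewrite big_ord0; rewrite big_ord0 Rintegral_cst // mul0r.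
under eq_Rintegral do rewrite big_ord_recl.
rewrite RintegralD //.
- by rewrite IH // big_ord_recl.
- exact: IF.
- exact: (rintegrable_sum (fun k => IF (lift ord0 k))).
Qed.

Lemma rintegrable_ge0 f : measurable_fun setT f -> (forall x, 0 <= f x) ->
  (\int[mu]_x (f x)%:E < +oo)%E -> rintegrable f.
Proof.
move=> mf f0 fin; apply/integrableP; split; first exact/measurable_EFinP.
by under eq_integral do rewrite /= ger0_norm //.
Qed.

Lemma Rintegral_eq0_ae f : rintegrable f -> (forall x, 0 <= f x) ->
  \int[mu]_x f x = 0 -> {ae mu, forall x, f x = 0}.
Proof.
move=> If f0 If0.
have : (\int[mu]_x `|(EFin \o f) x| = 0)%E.
  under eq_integral do rewrite /= ger0_norm //.
  by rewrite integral_Rintegral // If0.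
move=> /(ae_eq_integral_abs mu measurableT (measurable_int mu If)).
by apply: filterS => x /(_ I) [].
Qed.

Lemma measurable_patch (D : set X) (f : X -> R) : measurable D ->
  measurable_fun setT f -> measurable_fun setT (fun x => if x \in D then f x else 0).
Proof.
move=> mD mf; exact: (measurable_restrictT f mD).1 (measurable_funS measurableT (subsetT D) mf).
Qed.

Lemma rintegrable_patch (D : set X) (f : X -> R) : measurable D ->
  measurable_fun setT f -> (\int[mu]_(x in D) `|f x|%:E < +oo)%E ->
  rintegrable (fun x => if x \in D then f x else 0).
Proof.
move=> mD mf fin; apply/integrableP; split.
  by apply/measurable_EFinP; exact: measurable_patch.
rewrite integral_mkcond in fin; apply: le_lt_trans fin; rewrite le_eqVlt; apply/orP; left.
apply/eqP/eq_integral => x _; rewrite /restrict /patch /=.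
by case: (x \in D); rewrite //= normr0.
Qed.

Lemma abs_mul_le_sqr (a b : R) : `|a * b| <= a ^+ 2 + b ^+ 2.
Proof.
rewrite normrM -(real_normK (num_real a)) -(real_normK (num_real b)).
have := normr_ge0 a; have := normr_ge0 b; nra.
Qed.

Lemma sqintegrable_mul f g : sqintegrable f -> sqintegrable g ->
  rintegrable (fun x => f x * g x).
Proof.
move=> [mf If] [mg Ig].
apply: (le_integrable measurableT _ _ (rintegrableD If Ig)).
  by apply/measurable_EFinP; exact: measurable_funM.
move=> x _ /=; rewrite lee_fin (ger0_norm (addr_ge0 (sqr_ge0 _) (sqr_ge0 _))).
exact: abs_mul_le_sqr.
Qed.

Lemma sqintegrableD f g : sqintegrable f -> sqintegrable g ->
  sqintegrable (fun x => f x + g x).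
Proof.
move=> Lf Lg; split; first by apply: measurable_funD; [case: Lf|case: Lg].
have := rintegrableD (rintegrableD Lf.2 (rintegrableZ 2 (sqintegrable_mul Lf Lg))) Lg.2.
by apply: eq_rintegrable => x; ring.
Qed.

Lemma sqintegrableZ c f : sqintegrable f -> sqintegrable (fun x => c * f x).
Proof.
move=> [mf If]; split; first exact: measurable_funM.
by apply: eq_rintegrable (rintegrableZ (c ^+ 2) If) => x; ring.
Qed.

Lemma sqintegrableN f : sqintegrable f -> sqintegrable (fun x => - f x).
Proof.
move=> Lf; have := sqintegrableZ (-1) Lf.
by congr sqintegrable; apply: funext => x; rewrite mulN1r.
Qed.

Lemma sqintegrableB f g : sqintegrable f -> sqintegrable g ->
  sqintegrable (fun x => f x - g x).
Proof. by move=> Lf Lg; exact: sqintegrableD Lf (sqintegrableN Lg). Qed.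

Lemma sqintegrable_sum m (F : 'I_m -> X -> R) : (forall k, sqintegrable (F k)) ->
  sqintegrable (fun x => \sum_(k < m) F k x).
Proof.
elim: m F => [|m IH] F LF.
  have -> : (fun x => \sum_(k < 0) F k x) = (fun _ => 0).
    by apply: funext => x; rewrite big_ord0.
  split; first exact: measurable_cst.
  by apply: (@eq_rintegrable (fun _ => 0)); [move=> x; rewrite expr0n|exact: integrable0].
have -> : (fun x => \sum_(k < m.+1) F k x) =
          (fun x => F ord0 x + \sum_(k < m) F (lift ord0 k) x).
  by apply: funext => x; rewrite big_ord_recl.
exact: sqintegrableD (LF ord0) (IH _ (fun k => LF (lift ord0 k))).
Qed.

Lemma sqintegrable_of_sqr_sum f g : measurable_fun setT f -> measurable_fun setT g ->
  rintegrable (fun x => f x ^+ 2 + g x ^+ 2) -> sqintegrable f /\ sqintegrable g.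
Proof.
move=> mf mg I; split; split => //; apply: (le_integrable measurableT _ _ I);
  try by apply/measurable_EFinP; exact: measurable_funX.
all: move=> x _ /=; rewrite lee_fin !ger0_norm ?addr_ge0 ?sqr_ge0 //.
- by rewrite lerDl sqr_ge0.
- by rewrite lerDr sqr_ge0.
Qed.

End RealIntegrable.

Section GramForm.
Variables (R : realType) (d : measure_display) (X : measurableType d)
  (mu : {measure set X -> \bar R}) (m : nat) (U V : 'I_m -> X -> R).
Hypotheses (U_L2 : forall k, sqintegrable mu (U k))
           (V_L2 : forall k, sqintegrable mu (V k)).

(* For complex-valued functions U_k + i V_k, the real Gram matrix and the
   squared modulus of the combination with real coefficients c. *)
Definition gram (k l : 'I_m) : R := \int[mu]_x (U k x * U l x + V k x * V l x).
Definition comb_sqr (c : 'I_m -> R) (x : X) : R :=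
  (\sum_(k < m) c k * U k x) ^+ 2 + (\sum_(k < m) c k * V k x) ^+ 2.

Let gram_integrand_integrable k l :
  rintegrable mu (fun x => U k x * U l x + V k x * V l x).
Proof. by apply: rintegrableD; apply: sqintegrable_mul. Qed.

Lemma comb_sqrE c x :
  comb_sqr c x = \sum_(k < m) \sum_(l < m) c k * c l * (U k x * U l x + V k x * V l x).
Proof.
rewrite /comb_sqr !expr2 !mulr_suml -big_split /=; apply: eq_bigr => k _.
rewrite !mulr_sumr -big_split /=; apply: eq_bigr => l _; ring.
Qed.

Lemma comb_sqr_integrable c : rintegrable mu (comb_sqr c).
Proof.
apply: eq_rintegrable (fun x => esym (comb_sqrE c x)) _.
by apply: rintegrable_sum => k; apply: rintegrable_sum => l; apply: rintegrableZ.
Qed.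

Lemma Rintegral_comb_sqr c : \int[mu]_x comb_sqr c x = qform gram c.
Proof.
under eq_Rintegral do rewrite comb_sqrE.
rewrite Rintegral_sum => [|k]; last by apply: rintegrable_sum => l; apply: rintegrableZ.
apply: eq_bigr => k _; rewrite Rintegral_sum => [|l]; last exact: rintegrableZ.
by apply: eq_bigr => l _; rewrite RintegralZl //; exact: gram_integrand_integrable.
Qed.

Lemma gram_coercive :
  (forall c : 'I_m -> R,
     {ae mu, forall x, \sum_(k < m) c k * U k x = 0 /\ \sum_(k < m) c k * V k x = 0} ->
     forall k, c k = 0) ->
  exists2 A, 0 < A & forall c, A * sqnorm c <= \int[mu]_x comb_sqr c x.
Proof.
move=> indep.
have comb_sqr_ge0 c x : 0 <= comb_sqr c x by rewrite addr_ge0 ?sqr_ge0.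
have gram_sym k l : gram k l = gram l k.
  by apply: eq_Rintegral => x _; ring.
have gram_psd c : 0 <= qform gram c.
  by rewrite -Rintegral_comb_sqr; apply: Rintegral_ge0.
have gram_def c : qform gram c = 0 -> forall k, c k = 0.
  rewrite -Rintegral_comb_sqr => /(Rintegral_eq0_ae (comb_sqr_integrable c) (comb_sqr_ge0 c)).
  move=> c0; apply: indep; apply: filterS c0 => x /eqP.
  by rewrite paddr_eq0 ?sqr_ge0 // !sqrf_eq0 => /andP[/eqP -> /eqP ->].
have [A A_gt0 HA] := posdef_qform_coercive gram_sym gram_psd gram_def.
by exists A => // c; rewrite Rintegral_comb_sqr.
Qed.

End GramForm.

Section ScalarCoordinates.
Variables (R : realType) (isC : bool).
Notation F := (field_of R isC).

Lemma sreD (a b : F) : sre (a + b) = sre a + sre b.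
Proof. by case: isC a b => [[a1 a2] [b1 b2]|a b]. Qed.
Lemma simD (a b : F) : sim (a + b) = sim a + sim b.
Proof. by case: isC a b => [[a1 a2] [b1 b2]|a b] //=; rewrite addr0. Qed.
Lemma sre0 : sre (0 : F) = 0.
Proof. by case: isC. Qed.
Lemma sim0 : sim (0 : F) = 0.
Proof. by case: isC. Qed.
Lemma sreM (a b : F) : sre (a * b) = sre a * sre b - sim a * sim b.
Proof. by case: isC a b => [[a1 a2] [b1 b2]|a b] //=; rewrite mulr0 subr0. Qed.
Lemma simM (a b : F) : sim (a * b) = sre a * sim b + sim a * sre b.
Proof. by case: isC a b => [[a1 a2] [b1 b2]|a b] //=; rewrite mulr0 mul0r addr0. Qed.
Lemma sre_conj (a : F) : sre (scj a) = sre a.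
Proof. by case: isC a => [[a1 a2]|a]. Qed.
Lemma sim_conj (a : F) : sim (scj a) = - sim a.
Proof. by case: isC a => [[a1 a2]|a] //=; rewrite oppr0. Qed.
Lemma scalar_eq0 (a : F) : sre a = 0 -> sim a = 0 -> a = 0.
Proof. by case: isC a => [[a1 a2]|a] //= -> ->. Qed.

Lemma sre_sum m (f : 'I_m -> F) : sre (\sum_(k < m) f k) = \sum_(k < m) sre (f k).
Proof. by elim/big_ind2: _ => // [|a b c e <- <-]; rewrite ?sre0 ?sreD. Qed.
Lemma sim_sum m (f : 'I_m -> F) : sim (\sum_(k < m) f k) = \sum_(k < m) sim (f k).
Proof. by elim/big_ind2: _ => // [|a b c e <- <-]; rewrite ?sim0 ?simD. Qed.

Lemma sre_inner m (v w : 'I_m -> F) :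
  sre (inner v w) = \sum_(j < m) (sre (v j) * sre (w j) + sim (v j) * sim (w j)).
Proof.
rewrite /inner sre_sum; apply: eq_bigr => j _.
by rewrite sreM sre_conj sim_conj; ring.
Qed.
Lemma sim_inner m (v w : 'I_m -> F) :
  sim (inner v w) = \sum_(j < m) (sim (v j) * sre (w j) - sre (v j) * sim (w j)).
Proof.
rewrite /inner sim_sum; apply: eq_bigr => j _.
by rewrite simM sre_conj sim_conj; ring.
Qed.

Definition mkscalar (x y : R) : F :=
  (if isC as b return R -> R -> field_of R b
   then fun x y => complex.Complex x y else fun x _ => x) x y.

Lemma sre_mkscalar x y : sre (mkscalar x y) = x.
Proof. by rewrite /mkscalar; case: isC. Qed.
Lemma sim_mkscalar x y : isC -> sim (mkscalar x y) = y.
Proof. by rewrite /mkscalar; case: isC. Qed.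
Lemma sim_real (u : F) : ~~ isC -> sim u = 0.
Proof. by case: isC u. Qed.

Lemma normsq_ge0 m (v : 'I_m -> F) : 0 <= normsq v.
Proof. by apply: sumr_ge0 => j _; rewrite addr_ge0 ?sqr_ge0. Qed.

(* Cauchy-Schwarz for the inner product of F^m, up to a factor 2 coming from
   the estimate in real coordinates. *)
Lemma absq_inner_le m (v w : 'I_m -> F) : absq (inner v w) <= 2 * (normsq v * normsq w).
Proof.
have normsqE (u : 'I_m -> F) :
    normsq u = sqnorm (fun j => sre (u j)) + sqnorm (fun j => sim (u j)).
  by rewrite /normsq /absq big_split.
rewrite /absq sre_inner sim_inner big_split sumrB /= !normsqE.
set p := fun j => sre (v j); set q := fun j => sim (v j).
set r := fun j => sre (w j); set s := fun j => sim (w j).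
have := cauchy_schwarz p r; have := cauchy_schwarz q s.
have := cauchy_schwarz q r; have := cauchy_schwarz p s.
set A1 := \sum_(j < m) p j * r j; set A2 := \sum_(j < m) q j * s j.
set A3 := \sum_(j < m) q j * r j; set A4 := \sum_(j < m) p j * s j.
have := sqr_ge0 (A1 - A2); have := sqr_ge0 (A3 + A4).
rewrite !expr2; nra.
Qed.

End ScalarCoordinates.

Section Concatenation.
Variables (T : Type) (n : nat).

Definition catv (p q : 'I_n -> T) : 'I_(n + n) -> T :=
  fun k => match fintype.split k with inl j => p j | inr j => q j end.

Lemma catv_lshift p q j : catv p q (lshift n j) = p j.
Proof. by rewrite /catv (unsplitK (inl _ j)). Qed.
Lemma catv_rshift p q j : catv p q (rshift n j) = q j.
Proof. by rewrite /catv (unsplitK (inr _ j)). Qed.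

Lemma catvK (c : 'I_(n + n) -> T) :
  catv (fun j => c (lshift n j)) (fun j => c (rshift n j)) = c.
Proof. by apply: funext => k; rewrite /catv -[in RHS](splitK k); case: fintype.split. Qed.

End Concatenation.

Lemma sum_catv_mul (R : comNzRingType) n (p q u v : 'I_n -> R) :
  \sum_(k < n + n) catv p q k * catv u v k = \sum_(j < n) (p j * u j + q j * v j).
Proof.
by rewrite big_split_ord big_split /=; congr (_ + _); apply: eq_bigr => j _;
  rewrite ?catv_lshift ?catv_rshift.
Qed.

Lemma sqnorm_catv (R : realFieldType) n (p q : 'I_n -> R) :
  sqnorm (catv p q) = sqnorm p + sqnorm q.
Proof.
by rewrite /sqnorm big_split_ord; congr (_ + _); apply: eq_bigr => j _;
  rewrite ?catv_lshift ?catv_rshift.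
Qed.

Section Construction.
Variables (R : realType) (isC : bool) (d : measure_display) (X : measurableType d)
  (mu : {measure set X -> \bar R}) (n : nat).
Notation F := (field_of R isC).
Variables (h : X -> F) (Y : set X) (g : 'I_n -> X -> F) (dv : 'I_n -> F).
Hypotheses (h_L2 : in_L2_on mu setT h) (mY : measurable Y)
  (g_L2 : forall i, in_L2_on mu Y (g i))
  (g_indep : forall c : 'I_n -> F,
     {ae mu, forall x, Y x -> \sum_(i < n) c i * g i x = 0} -> forall i, c i = 0)
  (Z_pos : (0 < mu (~` Y `&` [set x | (h x != 0)%R]))%E).

Let hr x := sre (h x).
Let hi x := sim (h x).
Let gr i x := if x \in Y then sre (g i x) else 0.
Let gi i x := if x \in Y then sim (g i x) else 0.

(* The set Z := (X \ Y) /\ {h <> 0} carries the correction term of the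
   frame, and h restricted to Z. *)
Let Z := ~` Y `&` [set x | h x != 0].
Let zr x := if x \in Z then hr x else 0.
Let zi x := if x \in Z then hi x else 0.

Let h_sqint : sqintegrable mu hr /\ sqintegrable mu hi.
Proof.
case: h_L2 => -[mhr mhi] h_fin.
have mh2 : measurable_fun setT (fun x => hr x ^+ 2 + hi x ^+ 2).
  by apply: measurable_funD; apply: measurable_funX.
apply: sqintegrable_of_sqr_sum => //.
by apply: rintegrable_ge0 => // x; rewrite addr_ge0 ?sqr_ge0.
Qed.

Let g_sqint i : sqintegrable mu (gr i) /\ sqintegrable mu (gi i).
Proof.
case: (g_L2 i) => -[mgr mgi] g_fin.
apply: sqintegrable_of_sqr_sum; try exact: measurable_patch.
have : rintegrable mu (fun x => if x \in Y then sre (g i x) ^+ 2 + sim (g i x) ^+ 2 else 0).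
  apply: rintegrable_patch => //; first by apply: measurable_funD; apply: measurable_funX.
  by under eq_integral do rewrite ger0_norm ?addr_ge0 ?sqr_ge0 //.
by apply: eq_rintegrable => x; rewrite /gr /gi; case: (x \in Y); rewrite // expr0n addr0.
Qed.

Let absq_h_gt0 x : h x != 0 -> 0 < hr x ^+ 2 + hi x ^+ 2.
Proof.
move=> hx; rewrite lt_neqAle addr_ge0 ?sqr_ge0 // andbT eq_sym.
rewrite paddr_eq0 ?sqr_ge0 // !sqrf_eq0; apply/negP => /andP[/eqP r0 /eqP i0].
by move/eqP: hx; apply; apply: scalar_eq0.
Qed.

Let mZ : measurable Z.
Proof.
apply: measurableI; first exact: measurableC.
have mh2 : measurable_fun setT (fun x => hr x ^+ 2 + hi x ^+ 2).
  by case: h_sqint => -[mhr _] [mhi _]; apply: measurable_funD; apply: measurable_funX.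
have := mh2 measurableT [set~ (0:R)] (measurableC (measurable_set1 _)).
rewrite setTI; congr measurable; apply/seteqP; split => x /=.
  move=> h2; apply/eqP => h0; apply: h2.
  by rewrite /hr /hi h0 sre0 sim0 expr0n addr0.
by move=> hx; apply/eqP; rewrite gt_eqF // absq_h_gt0.
Qed.

Let notin_Y x : x \in Z -> (x \in Y) = false.
Proof. by move=> /set_mem [nY _]; apply/negbTE/negP => /set_mem. Qed.

Let z_sqint : sqintegrable mu zr /\ sqintegrable mu zi.
Proof.
case: h_sqint => -[mhr hr2] [mhi hi2].
apply: sqintegrable_of_sqr_sum; try exact: measurable_patch.
apply: (le_integrable measurableT _ _ (rintegrableD hr2 hi2)).
  apply/measurable_EFinP; apply: measurable_funD; apply: measurable_funX;
  exact: measurable_patch.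
move=> x _ /=; rewrite lee_fin !ger0_norm ?addr_ge0 ?sqr_ge0 //.
by rewrite /zr /zi; case: (x \in Z); rewrite // expr0n addr0 addr_ge0 ?sqr_ge0.
Qed.

Let hZ x := hr x * zr x + hi x * zi x.

Let hZE x : hZ x = if x \in Z then hr x ^+ 2 + hi x ^+ 2 else 0.
Proof. by rewrite /hZ /zr /zi; case: (x \in Z); rewrite ?mulr0 ?addr0 // !expr2. Qed.

Let hZ_integrable : rintegrable mu hZ.
Proof. by case: h_sqint z_sqint => ? ? [? ?]; apply: rintegrableD; apply: sqintegrable_mul. Qed.

Let K := \int[mu]_x hZ x.

Let K_gt0 : 0 < K.
Proof.
have hZ_ge0 x : 0 <= hZ x by rewrite hZE; case: (x \in Z); rewrite // addr_ge0 ?sqr_ge0.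
rewrite lt_neqAle Rintegral_ge0 // andbT eq_sym; apply/eqP.
move=> /(Rintegral_eq0_ae hZ_integrable hZ_ge0) [N [mN N0 hZN]].
have ZN : Z `<=` N.
  move=> x Zx; apply: hZN => /= /eqP; rewrite hZE (mem_set Zx) gt_eqF //.
  by apply: absq_h_gt0; case: Zx.
have : (0 < mu N)%E := lt_le_trans Z_pos (le_measure mu (mem_set mZ) (mem_set mN) ZN).
by rewrite N0 ltxx.
Qed.

(* Real and imaginary parts of int_Y h conj(g_i), and the correction vector
   w := (d - int_Y h conj(g)) / K. *)
Let tr i := \int[mu]_x (hr x * gr i x + hi x * gi i x).
Let ti i := \int[mu]_x (hi x * gr i x - hr x * gi i x).
Let w i : F := mkscalar isC ((sre (dv i) - tr i) / K) ((sim (dv i) - ti i) / K).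

Definition corrected_frame x i : F :=
  if x \in Y then scj (g i x) else if x \in Z then scj (h x) * w i else 0.
Local Notation phi := corrected_frame.

Let sre_phi x i : sre (phi x i) = gr i x + (sre (w i) * zr x + sim (w i) * zi x).
Proof.
rewrite /phi /gr /zr /zi; case: (boolP (x \in Y)) => xY.
  have -> : (x \in Z) = false by apply/negbTE/negP => /notin_Y; rewrite xY.
  by rewrite sre_conj !mulr0 !addr0.
case: (x \in Z); last by rewrite sre0 !mulr0 !addr0.
by rewrite sreM sre_conj sim_conj /hr /hi; ring.
Qed.

Let sim_phi x i : sim (phi x i) = - gi i x + (sim (w i) * zr x - sre (w i) * zi x).
Proof.
rewrite /phi /gi /zr /zi; case: (boolP (x \in Y)) => xY.
  have -> : (x \in Z) = false by apply/negbTE/negP => /notin_Y; rewrite xY.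
  by rewrite sim_conj !mulr0 subr0 addr0.
case: (x \in Z); last by rewrite sim0 !mulr0 subr0 !addr0 oppr0.
by rewrite simM sre_conj sim_conj /hr /hi; ring.
Qed.

Let phi_sqint i : sqintegrable mu (fun x => sre (phi x i)) /\
                  sqintegrable mu (fun x => sim (phi x i)).
Proof.
have [[gr2 gi2] [zr2 zi2]] := (g_sqint i, z_sqint).
split.
  rewrite (funext (sre_phi ^~ i)); apply: sqintegrableD => //.
  by apply: sqintegrableD; apply: sqintegrableZ.
rewrite (funext (sim_phi ^~ i)); apply: sqintegrableD.
  exact: sqintegrableN.
by apply: sqintegrableB; apply: sqintegrableZ.
Qed.

Let sre_hphi x i :
  sre (h x * phi x i) = (hr x * gr i x + hi x * gi i x) + sre (w i) * hZ x.
Proof. by rewrite sreM sre_phi sim_phi /hZ /zr /zi /hr /hi; case: (x \in Z); ring. Qed.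

Let sim_hphi x i :
  sim (h x * phi x i) = (hi x * gr i x - hr x * gi i x) + sim (w i) * hZ x.
Proof. by rewrite simM sre_phi sim_phi /hZ /zr /zi /hr /hi; case: (x \in Z); ring. Qed.

(* T(phi) = int_Y h conj(g) + K w = d, coordinatewise. *)
Lemma corrected_frame_T : T_eq mu h phi dv.
Proof.
have KN0 : K != 0 by rewrite gt_eqF ?K_gt0.
move=> i; have [[hr2 hi2] [gr2 gi2]] := (h_sqint, g_sqint i).
have tr_int : rintegrable mu (fun x => hr x * gr i x + hi x * gi i x).
  by apply: rintegrableD; apply: sqintegrable_mul.
have ti_int : rintegrable mu (fun x => hi x * gr i x - hr x * gi i x).
  by apply: rintegrableB; apply: sqintegrable_mul.
split.
  rewrite (eq_integral (fun x => ((hr x * gr i x + hi x * gi i x)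
                                  + sre (w i) * hZ x)%:E)) => [|x _]; last by rewrite sre_hphi.
  rewrite integral_Rintegral; last by apply: rintegrableD => //; exact: rintegrableZ.
  rewrite RintegralD //; last exact: rintegrableZ.
  by rewrite RintegralZl // -/K -/(tr i) sre_mkscalar; congr EFin; field.
case/orP: (orbN isC) => [isC_true|isR]; last first.
  by under eq_integral do rewrite sim_real //; rewrite integral0 sim_real.
rewrite (eq_integral (fun x => ((hi x * gr i x - hr x * gi i x)
                                + sim (w i) * hZ x)%:E)) => [|x _]; last by rewrite sim_hphi.
rewrite integral_Rintegral; last by apply: rintegrableD => //; exact: rintegrableZ.
rewrite RintegralD //; last exact: rintegrableZ.
by rewrite RintegralZl // -/K -/(ti i) sim_mkscalar //; congr EFin; field.
Qed.

(* Real coordinates of the family (g_i) on Y: a real combination c = (p, q)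
   of U + i V is the combination of the g_i with coefficients p + i q. *)
Let U k x := catv (fun j => gr j x) (fun j => - gi j x) k.
Let V k x := catv (fun j => gi j x) (fun j => gr j x) k.

Let U_sqint k : sqintegrable mu (U k).
Proof.
rewrite /U /catv; case: fintype.split => j; have [? ?] := g_sqint j => //.
exact: sqintegrableN.
Qed.

Let V_sqint k : sqintegrable mu (V k).
Proof. by rewrite /V /catv; case: fintype.split => j; have [? ?] := g_sqint j. Qed.

Let g_indep_coords (z : 'I_n -> F) (p q : 'I_n -> R) :
  (forall j, sre (z j) = p j) -> (forall j, sim (z j) = q j) ->
  {ae mu, forall x, \sum_(j < n) (p j * gr j x - q j * gi j x) = 0 /\
                    \sum_(j < n) (p j * gi j x + q j * gr j x) = 0} ->
  forall j, z j = 0.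
Proof.
move=> zp zq pq0; apply: g_indep; apply: filterS pq0 => x [re0 im0] Yx.
apply: scalar_eq0.
  rewrite sre_sum -[RHS]re0; apply: eq_bigr => j _.
  by rewrite sreM zp zq /gr /gi mem_set.
rewrite sim_sum -[RHS]im0; apply: eq_bigr => j _.
by rewrite simM zp zq /gr /gi mem_set // addrC.
Qed.

Let coords_indep (c : 'I_(n + n) -> R) :
  {ae mu, forall x, \sum_(k < n + n) c k * U k x = 0 /\
                    \sum_(k < n + n) c k * V k x = 0} ->
  forall k, c k = 0.
Proof.
rewrite -(catvK c); set p := fun j => c (lshift n j); set q := fun j => c (rshift n j).
move=> c0.
have pq0 : {ae mu, forall x, \sum_(j < n) (p j * gr j x - q j * gi j x) = 0 /\
                             \sum_(j < n) (p j * gi j x + q j * gr j x) = 0}.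
  apply: filterS c0 => x; rewrite /U /V !sum_catv_mul.
  by under eq_bigr do rewrite mulrN.
suff pq_eq0 j : p j = 0 /\ q j = 0.
  by move=> k; rewrite /catv; case: fintype.split => j; case: (pq_eq0 j).
case/orP: (orbN isC) => [isC_true|isR].
  have z0 := g_indep_coords (z := fun j => mkscalar isC (p j) (q j))
    (fun j => sre_mkscalar _ _ _) (fun j => sim_mkscalar _ _ isC_true) pq0.
  have := congr1 (@sre R F) (z0 j); have := congr1 (@sim R F) (z0 j).
  by rewrite sre_mkscalar sim_mkscalar // sre0 sim0 => -> ->.
(* over R the imaginary parts vanish, and p, q are two real combinations *)
have gi0 k x : gi k x = 0 by rewrite /gi; case: (x \in Y); rewrite ?sim_real.
have re_comb (r : 'I_n -> R) : {ae mu, forall x, \sum_(j < n) r j * gr j x = 0} ->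
    forall j, r j = 0.
  move=> r0 l; have := congr1 (@sre R F) (g_indep_coords (z := fun j => mkscalar isC (r j) 0)
    (fun j => sre_mkscalar _ _ _) (fun j => sim_real _ isR) _ l).
  rewrite sre_mkscalar sre0; apply; apply: filterS r0 => x r0.
  split; last by apply: big1 => k _; rewrite gi0 /=; ring.
  by rewrite -[RHS]r0; apply: eq_bigr => k _; rewrite gi0 /=; ring.
split; apply: re_comb j; apply: filterS pq0 => x [e1 e2].
  by rewrite -[RHS]e1; apply: eq_bigr => k _; rewrite gi0; ring.
by rewrite -[RHS]e2; apply: eq_bigr => k _; rewrite gi0; ring.
Qed.

Let absq_inner_phiE v x : absq (inner v (phi x)) =
    (\sum_(j < n) (sre (v j) * sre (phi x j) + sim (v j) * sim (phi x j))) ^+ 2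
  + (\sum_(j < n) (sim (v j) * sre (phi x j) - sre (v j) * sim (phi x j))) ^+ 2.
Proof. by rewrite /absq sre_inner sim_inner. Qed.

Let absq_inner_phi_integrable v : rintegrable mu (fun x => absq (inner v (phi x))).
Proof.
apply: eq_rintegrable (fun x => esym (absq_inner_phiE v x)) _.
have re_sqint j := (phi_sqint j).1; have im_sqint j := (phi_sqint j).2.
apply: rintegrableD; apply: (sqintegrable_sum (fun j => _)).2 => j.
  by apply: sqintegrableD; apply: sqintegrableZ.
by apply: sqintegrableB; apply: sqintegrableZ.
Qed.

Let normsq_phi_integrable : rintegrable mu (fun x => normsq (phi x)).
Proof.
apply: rintegrable_sum => j; apply: rintegrableD.
  exact: (phi_sqint j).1.2.
exact: (phi_sqint j).2.2.
Qed.

(* On Y, |<v, phi_x>|^2 is the squared modulus of sum_j v_j g_j(x); off Y the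
   latter is 0. *)
Let comb_sqr_le_absq v x :
  comb_sqr U V (catv (fun j => sre (v j)) (fun j => sim (v j))) x
  <= absq (inner v (phi x)).
Proof.
rewrite /comb_sqr /U /V !sum_catv_mul absq_inner_phiE.
have [xY|xNY] := boolP (x \in Y); last first.
  have gY0 j : gr j x = 0 /\ gi j x = 0 by rewrite /gr /gi (negbTE xNY).
  set rhs := (X in _ <= X).
  rewrite !big1 => [|j _|j _]; try by case: (gY0 j) => -> ->; ring.
  by rewrite /rhs expr2 mul0r addr0 addr_ge0 ?sqr_ge0.
have xNZ : (x \in Z) = false by apply/negbTE/negP => /notin_Y; rewrite xY.
rewrite le_eqVlt; apply/orP; left; apply/eqP.
by congr (_ ^+ 2 + _ ^+ 2); apply: eq_bigr => j _; rewrite sre_phi sim_phi /zr /zi xNZ; ring.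
Qed.

(* Lower frame bound, from the coercivity of the Gram form of the g_i. *)
Lemma corrected_frame_lower : exists2 A, 0 < A &
  forall v, A * normsq v <= \int[mu]_x absq (inner v (phi x)).
Proof.
have [A A_gt0 coercive] := gram_coercive U_sqint V_sqint coords_indep.
exists A => // v; set c := catv (fun j => sre (v j)) (fun j => sim (v j)).
have -> : normsq v = sqnorm c by rewrite sqnorm_catv /normsq /absq big_split.
apply: le_trans (coercive c) _; apply: le_Rintegral => //.
- exact: comb_sqr_integrable.
- exact: absq_inner_phi_integrable.
- by move=> x _; exact: comb_sqr_le_absq.
Qed.

(* Upper frame bound, from Cauchy-Schwarz and int ||phi_x||^2 < oo. *)
Lemma corrected_frame_upper v :
  \int[mu]_x absq (inner v (phi x)) <= 2 * \int[mu]_x normsq (phi x) * normsq v.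
Proof.
rewrite mulrAC -RintegralZl //.
apply: le_Rintegral => //.
- exact: absq_inner_phi_integrable.
- exact: rintegrableZ normsq_phi_integrable.
- by move=> x _; rewrite -mulrA; exact: absq_inner_le.
Qed.

Lemma corrected_frame_is_frame : continuous_frame mu phi.
Proof.
split; first by move=> i; split; [exact: (phi_sqint i).1.1|exact: (phi_sqint i).2.1].
have [A A_gt0 lower] := corrected_frame_lower.
exists A, (Num.max A (2 * \int[mu]_x normsq (phi x))); split => //.
split=> [|v]; first by rewrite le_max lexx.
rewrite integral_Rintegral ?lee_fin; last exact: absq_inner_phi_integrable.
split; first exact: lower.
apply: le_trans (corrected_frame_upper v) _.
by apply: ler_wpM2r; rewrite ?normsq_ge0 // le_max lexx orbT.
Qed.

End Construction.

Theorem proposition5p7 (R : realType) (isC : bool)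
    (d : measure_display) (X : measurableType d)
    (mu : {measure set X -> \bar R}) (n : nat) (hn : (1 <= n)%N)
    (h : X -> field_of R isC)
    (hL2 : in_L2_on mu setT h)
    (Y : set X) (mY : measurable Y)
    (hdim : L2_dim_ge (field_of R isC) mu Y n)
    (hpos : (0 < mu (~` Y `&` [set x | (h x != 0)%R]))%E) :
  forall dv : 'I_n -> field_of R isC,
    exists phi : X -> 'I_n -> field_of R isC,
      continuous_frame mu phi /\ T_eq mu h phi dv.
Proof.
move=> dv; have [g [g_L2 g_indep]] := hdim.
exists (corrected_frame mu h Y g dv); split.
- exact: corrected_frame_is_frame.
- exact: corrected_frame_T.
Qed.
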